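(* Let $M$ be an $(\mathcal R,\mathfrak g)$-module such that $\sigma(\mathfrak g_{\ge1})$ acts as zero on $M$. Then every additive subgroup $M'\subseteq M$ which is stable under the $\mathcal R$-action and under $\rho_{\mathfrak g}(\mathfrak g)$ is also stable under $\sigma(\mathfrak g_{\ge0})$, i.e. $M'$ is an $(\mathcal R,\mathfrak g)$-submodule.
   Context: $\mathbb F$ algebraically closed of characteristic $0$, $m,n\ge1$. $\mathcal R=\mathbb F[x_1,\dots,x_m]\otimes\Lambda(y_1,\dots,y_n)$ ($x_i$ even, $y_s$ odd), parity $\wp$. $\mathfrak g=W(m,n)$ the Lie superalgebra of superderivations of $\mathcal R$, free over $\mathcal R$ on even $\partial_i$ ($\partial_ix_j=\delta_{ij}$) and odd $D_t$ ($D_ty_s=\delta_{ts}$); $\mathfrak g_{\ge k}=\bigoplus_{i\ge k}\mathfrak g_i$ for the grading where $f\partial_j,fD_t\in\mathfrak g_{\deg f-1}$. An $(\mathcal R,\mathfrak g)$-module is an additive group $M$ with an $\mathcal R$-module structure $f\mapsto f_{\mathcal R}$, a $\mathfrak g$-module structure $\rho=\rho_{\mathfrak g}$ and a $\mathfrak g_{\ge0}$-module structure $\sigma$ such that for all $f\in\mathcal R$, $D\in\mathfrak g$, $D'\in\mathfrak g_{\ge0}$, $X\in\{\partial_i,D_j\}$: (i) $[\rho(D),f_{\mathcal R}]=(Df)_{\mathcal R}$; (ii) $[\sigma(D'),f_{\mathcal R}]=0$; (iii) $[\rho(X),\sigma(D')]=0$; (iv) $\rho(fX)=f_{\mathcal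 R}\circ\rho(X)+\sum_{i=1}^m(\partial_if)_{\mathcal R}\circ\sigma(x_iX)+(-1)^{\wp(f)+1}\sum_{j=1}^n(D_jf)_{\mathcal R}\circ\sigma(y_jX)$ (brackets are supercommutators). *)

From HB Require Import structures.
From mathcomp Require Import all_boot all_order all_algebra.
From mathcomp Require Import mpoly.
Set Implicit Arguments. Unset Strict Implicit. Unset Printing Implicit Defensive.
Import Order.TTheory GRing.Theory.
Local Open Scope ring_scope.

(* The supercommutative algebra R = F[x_1..x_m] (x) Lambda(y_1..y_n).  *)
(* An element f is stored through its coordinates on the basis y_S,    *)
(* S a subset of {1..n} (y_S = y_{s1} ... y_{sk}, s1 < ... < sk):      *)
(*   f = \sum_S (f S) y_S  with  f S in F[x_1..x_m].                   *)
Definition Rsup (F : fieldType) (m n : nat) :=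
  {ffun {set 'I_n} -> {mpoly F[m]}}.

Section SuperAlg.
Variables (F : fieldType) (m n : nat).
Local Notation R := (Rsup F m n).

(* y_A y_B = ysign A B y_{A u B} for disjoint A, B *)
Definition ysign (A B : {set 'I_n}) : F :=
  (-1) ^+ #|[set p : 'I_n * 'I_n | (p.1 \in A) && (p.2 \in B) && (p.2 < p.1)%N]|.

Definition Rmul (f g : R) : R :=
  [ffun S => \sum_(A : {set 'I_n}) \sum_(B : {set 'I_n} |
       [disjoint A & B] && (A :|: B == S)) ysign A B *: (f A * g B)].

Definition Rconst (c : F) : R := [ffun S => if S == set0 then c%:MP else 0].
Definition Rone : R := Rconst 1.
Definition Rx (i : 'I_m) : R := [ffun S => if S == set0 then 'X_i else 0].
Definition Ry (s : 'I_n) : R := [ffun S => if S == [set s] then 1 else 0].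

(* f is homogeneous of parity p (p = false : even, p = true : odd) *)
Definition Rpar (p : bool) (f : R) : Prop :=
  forall S : {set 'I_n}, odd #|S| != p -> f S = 0.

(* f lies in the sum of the homogeneous components of degree >= k
   (deg x_i = deg y_s = 1) *)
Definition Rge (k : nat) (f : R) : Prop :=
  forall (S : {set 'I_n}) (mo : 'X_{1..m}), mo \in msupp (f S) ->
    (k <= mdeg mo + #|S|)%N.

Definition Rdx (i : 'I_m) (f : R) : R := [ffun S => mderiv i (f S)].

(* odd (left) derivation D_t, D_t y_s = delta_ts *)
Definition Rdy (t : 'I_n) (f : R) : R :=
  [ffun S : {set 'I_n} => if t \in S then 0
             else (-1) ^+ #|[set s in S | (s < t)%N]| *: f (t |: S)].

(* W(m,n): free R-module on the even d_i and the odd D_t.              *)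
(* D = (a, b) stands for \sum_i a_i d_i + \sum_t b_t D_t.              *)
Definition Wmn := ({ffun 'I_m -> R} * {ffun 'I_n -> R})%type.

Definition Wact (D : Wmn) (h : R) : R :=
  \sum_(i < m) Rmul (D.1 i) (Rdx i h) + \sum_(t < n) Rmul (D.2 t) (Rdy t h).

Definition Wdx (f : R) (i : 'I_m) : Wmn := ([ffun j => if j == i then f else 0], 0).
Definition Wdy (f : R) (t : 'I_n) : Wmn := (0, [ffun s => if s == t then f else 0]).

Definition Wmulgen (f : R) (x : 'I_m + 'I_n) : Wmn :=
  match x with inl i => Wdx f i | inr t => Wdy f t end.
Definition Wgen (x : 'I_m + 'I_n) : Wmn := Wmulgen Rone x.
Definition Wgenpar (x : 'I_m + 'I_n) : bool := if x is inr _ then true else false.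

Definition Wpar (p : bool) (D : Wmn) : Prop :=
  (forall i, Rpar p (D.1 i)) /\ (forall t, Rpar (~~ p) (D.2 t)).

(* D in g_{>= k}: f d_j, f D_t lie in g_{deg f - 1} *)
Definition Wge (k : nat) (D : Wmn) : Prop :=
  (forall i, Rge k.+1 (D.1 i)) /\ (forall t, Rge k.+1 (D.2 t)).

Definition Wscale (c : F) (D : Wmn) : Wmn :=
  ([ffun i => c *: D.1 i], [ffun t => c *: D.2 t]).

End SuperAlg.

Definition sgn (F : pzRingType) (p q : bool) : F := (-1) ^+ (p && q).

Definition scomm (M : zmodType) (p q : bool) (A B : M -> M) : M -> M :=
  fun v => A (B v) - B (A v) *~ sgn int p q.

Definition additive_map (M : zmodType) (A : M -> M) : Prop :=
  forall u v, A (u + v) = A u + A v.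

Definition is_RgModule (F : fieldType) (m n : nat) (M : zmodType)
    (Ract : Rsup F m n -> M -> M) (rho sigma : Wmn F m n -> M -> M) : Prop :=
  [/\ (forall f, additive_map (Ract f)),
      (forall f g v, Ract (f + g) v = Ract f v + Ract g v),
      (forall v, Ract (Rone F m n) v = v) &
      (forall f g v, Ract (Rmul f g) v = Ract f (Ract g v))] /\
  (* g-module structure rho (F acting on M through the constants of R) *)
  [/\ (forall D, additive_map (rho D)),
      (forall D E v, rho (D + E) v = rho D v + rho E v),
      (forall c D v, rho (Wscale c D) v = Ract (Rconst m n c) (rho D v)) &
      (forall p q D E G, Wpar p D -> Wpar q E ->
         (forall h, Wact G h = Wact D (Wact E h) - sgn _ p q * Wact E (Wact D h)) ->
         forall v, rho G v = scomm p q (rho D) (rho E) v)] /\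
  [/\ (forall D, Wge 0 D -> additive_map (sigma D)),
      (forall D E, Wge 0 D -> Wge 0 E -> forall v,
         sigma (D + E) v = sigma D v + sigma E v),
      (forall c D, Wge 0 D -> forall v,
         sigma (Wscale c D) v = Ract (Rconst m n c) (sigma D v)) &
      (forall p q D E G, Wge 0 D -> Wge 0 E -> Wpar p D -> Wpar q E ->
         (forall h, Wact G h = Wact D (Wact E h) - sgn _ p q * Wact E (Wact D h)) ->
         forall v, sigma G v = scomm p q (sigma D) (sigma E) v)] /\
  [/\
      (forall p q D f, Wpar p D -> Rpar q f -> forall v,
         scomm p q (rho D) (Ract f) v = Ract (Wact D f) v),
      (forall p q D f, Wge 0 D -> Wpar p D -> Rpar q f -> forall v,
         scomm p q (sigma D) (Ract f) v = 0),
      (forall x p D, Wge 0 D -> Wpar p D -> forall v,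
         scomm (Wgenpar x) p (rho (Wgen F x)) (sigma D) v = 0) &
      (forall x q f, Rpar q f -> forall v,
         rho (Wmulgen f x) v =
           Ract f (rho (Wgen F x) v)
           + \sum_(i < m) Ract (Rdx i f) (sigma (Wmulgen (Rx F n i) x) v)
           + (\sum_(j < n) Ract (Rdy j f) (sigma (Wmulgen (Ry F m j) x) v))
               *~ sgn int (~~ q) true)].

(* Write D in g_{>=0} as a sum of terms f X, X a standard generator and f
   without constant term, and split f into its linear part and a part of
   degree >= 2.  The latter gives elements of g_{>=1}, on which sigma
   vanishes.  For the linear part, axiom (iv) applied to f = x_k or y_k
   reads sigma(x_k X) = rho(x_k X) - x_k rho(X) (resp. with y_k), and the
   right-hand side preserves every R-stable, rho-stable subgroup. *)
From HB Require Import structures.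
From mathcomp Require Import all_boot all_order all_algebra.
From mathcomp Require Import mpoly.
Set Implicit Arguments. Unset Strict Implicit. Unset Printing Implicit Defensive.
Import GRing.Theory.
Local Open Scope ring_scope.

Section Filtration.
Variables (F : fieldType) (m n : nat).
Local Notation R := (Rsup F m n).
Local Notation W := (Wmn F m n).

Lemma Rge0 k : Rge k (0 : R).
Proof. by move=> S mo; rewrite ffunE mcoeff_msupp mcoeff0 eqxx. Qed.

Lemma RgeD k (f g : R) : Rge k f -> Rge k g -> Rge k (f + g).
Proof.
move=> hf hg S mo; rewrite ffunE => /msuppD_le; rewrite mem_cat.
by case/orP; [exact: hf | exact: hg].
Qed.

Lemma RgeZ k c (f : R) : Rge k f -> Rge k (c *: f).
Proof. by move=> hf S mo; rewrite ffunE => /msuppZ_le; apply: hf. Qed.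

Lemma RgeW k (f : R) : Rge k.+1 f -> Rge k f.
Proof. by move=> hf S mo /hf; apply: ltnW. Qed.

Lemma Rge1_Rx k : Rge 1 (Rx F n k : R).
Proof.
move=> S mo; rewrite ffunE mcoeff_msupp.
have [-> | _] := eqVneq S set0; last by rewrite mcoeff0 eqxx.
by rewrite mcoeffX; have [<- | ] := eqVneq U_(k)%MM mo; rewrite ?mdeg1 ?eqxx.
Qed.

Lemma Rge1_Ry k : Rge 1 (Ry F m k : R).
Proof.
move=> S mo; rewrite ffunE mcoeff_msupp.
have [-> | _] := eqVneq S [set k]; last by rewrite mcoeff0 eqxx.
by rewrite cards1 addn1.
Qed.

Lemma Wge0 k : Wge k (0 : W).
Proof. by split=> i /=; rewrite ffunE; apply: Rge0. Qed.

Lemma WgeD k (D E : W) : Wge k D -> Wge k E -> Wge k (D + E).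
Proof. by move=> [hD1 hD2] [hE1 hE2]; split=> i /=; rewrite ffunE; apply: RgeD. Qed.

Lemma WgeZ k c (D : W) : Wge k D -> Wge k (Wscale c D).
Proof. by move=> [hD1 hD2]; split=> i /=; rewrite ffunE; apply: RgeZ. Qed.

Lemma Wge_mulgen k (f : R) x : Rge k.+1 f -> Wge k (Wmulgen f x).
Proof.
move=> hf; case: x => i; split=> j /=; rewrite ffunE;
  by [exact: Rge0 | case: ifP => _; [exact: hf | exact: Rge0]].
Qed.

Lemma Wmulgen0 x : Wmulgen (0 : R) x = 0.
Proof.
by case: x => i; congr pair; apply/ffunP => j; rewrite !ffunE; case: ifP.
Qed.

Lemma WmulgenD (f g : R) x : Wmulgen (f + g) x = Wmulgen f x + Wmulgen g x.
Proof.
case: x => i; congr pair; rewrite /= ?addr0 //;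
  by apply/ffunP => j; rewrite !ffunE; case: ifP; rewrite ?addr0.
Qed.

Lemma WmulgenZ c (f : R) x : Wmulgen (c *: f) x = Wscale c (Wmulgen f x).
Proof.
case: x => i; congr pair; apply/ffunP => j; rewrite !ffunE ?scaler0 //;
  by case: ifP; rewrite ?scaler0.
Qed.

Lemma Wmulgen_sum (I : Type) (r : seq I) (P : pred I) (G : I -> R) x :
  Wmulgen (\sum_(i <- r | P i) G i) x = \sum_(i <- r | P i) Wmulgen (G i) x.
Proof.
apply: (big_morph (fun f => Wmulgen f x)); last exact: Wmulgen0.
by move=> f g; apply: WmulgenD.
Qed.

Lemma Wmn_decomp (D : W) :
  D = \sum_(i < m) Wmulgen (D.1 i) (inl i) + \sum_(t < n) Wmulgen (D.2 t) (inr t).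
Proof.
have fst_sum k (G : 'I_k -> W) : (\sum_i G i).1 = \sum_i (G i).1 by apply: big_morph.
have snd_sum k (G : 'I_k -> W) : (\sum_i G i).2 = \sum_i (G i).2 by apply: big_morph.
have delta_sum k (a : {ffun 'I_k -> R}) :
    \sum_(i < k) [ffun j => if j == i then a i else 0] = a.
  apply/ffunP => j; rewrite sum_ffunE (bigD1 j) //= ffunE eqxx big1 ?addr0 //.
  by move=> i /negbTE; rewrite ffunE eq_sym => ->.
case: D => a b; congr pair; rewrite /= ?fst_sum ?snd_sum /=.
  by rewrite big1_eq addr0 delta_sum.
by rewrite big1_eq add0r delta_sum.
Qed.

End Filtration.

Section Generators.
Variables (F : fieldType) (m n : nat).
Local Notation R := (Rsup F m n).

Lemma Rpar_Rx k : Rpar false (Rx F n k : R).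
Proof. by move=> S; rewrite ffunE; case: (eqVneq S set0) => [->|]; rewrite ?cards0. Qed.

Lemma Rpar_Ry k : Rpar true (Ry F m k : R).
Proof. by move=> S; rewrite ffunE; case: (eqVneq S [set k]) => [->|]; rewrite ?cards1. Qed.

Lemma Rdx_Rx i k : Rdx i (Rx F n k : R) = if i == k then Rone F m n else 0.
Proof.
apply/ffunP => S; case: (eqVneq i k) => [<- | ik]; rewrite !ffunE;
  case: ifP => _; rewrite ?mderiv0 // mderivX mnm1E.
  by rewrite eqxx -{1}(add0m U_(i)%MM) addmK mpolyX0 scale1r.
by rewrite eq_sym (negbTE ik) scale0r.
Qed.

Lemma Rdy_Rx j k : Rdy j (Rx F n k : R) = 0.
Proof.
apply/ffunP => S; rewrite !ffunE; case: ifP => // _.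
by case: eqP; rewrite ?scaler0 // => /setP/(_ j); rewrite !inE eqxx.
Qed.

Lemma Rdx_Ry i k : Rdx i (Ry F m k : R) = 0.
Proof. by apply/ffunP => S; rewrite !ffunE; case: ifP; rewrite ?mderivC ?mderiv0. Qed.

Lemma Rdy_Ry j k : Rdy j (Ry F m k : R) = if j == k then Rone F m n else 0.
Proof.
apply/ffunP => S; case: (eqVneq j k) => [<- | jk]; rewrite !ffunE; last first.
  case: ifP => // _; case: eqP; rewrite ?scaler0 // => /setP/(_ j).
  by rewrite !inE eqxx (negbTE jk).
have [-> | /set0Pn[s sS]] := eqVneq S set0.
  rewrite in_set0 setU0 !eqxx (_ : [set _ in _ | _] = set0) ?cards0 ?scale1r //.
  by apply/setP => s; rewrite !inE.
case: ifPn => // jNS; case: eqP; rewrite ?scaler0 // => /setP/(_ s).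
by rewrite !inE sS orbT => /esym/eqP sj; rewrite -sj sS in jNS.
Qed.

End Generators.

Section LinearPart.
Variables (F : fieldType) (m n : nat).
Local Notation R := (Rsup F m n).

Definition Rlin (f : R) : R :=
  \sum_(k < m) (f set0)@_U_(k) *: Rx F n k + \sum_(j < n) (f [set j])@_0 *: Ry F m j.

Lemma Rlin_set0 (f : R) : Rlin f set0 = \sum_(k < m) (f set0)@_U_(k) *: 'X_k.
Proof.
rewrite ffunE !sum_ffunE [X in _ + X]big1 ?addr0 => [|j _]; last first.
  rewrite !ffunE (_ : set0 == _ = false) ?scaler0 //.
  by apply/negbTE/eqP => /setP/(_ j); rewrite !inE eqxx.
by apply: eq_bigr => k _; rewrite !ffunE eqxx.
Qed.

Lemma Rlin_set1 (f : R) j : Rlin f [set j] = (f [set j])@_0 *: 1.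
Proof.
rewrite ffunE !sum_ffunE big1 ?add0r => [|k _]; last first.
  rewrite !ffunE (_ : [set j] == set0 = false) ?scaler0 //.
  by apply/negbTE/set0Pn; exists j; rewrite inE.
rewrite (bigD1 j) //= big1 ?addr0 => [|i ij]; rewrite !ffunE ?eqxx //.
by rewrite (inj_eq set1_inj) eq_sym (negbTE ij) scaler0.
Qed.

Lemma Rlin_eq0 (f : R) (S : {set 'I_n}) : (1 < #|S|)%N -> Rlin f S = 0.
Proof.
move=> S2; rewrite ffunE !sum_ffunE !big1 ?addr0 // => i _; rewrite !ffunE;
  by case: eqP S2 => [-> | _]; rewrite ?cards0 ?cards1 ?scaler0.
Qed.

Lemma Rge2_subRlin (f : R) : Rge 1 f -> Rge 2 (f - Rlin f).
Proof.
move=> f_ge1 S mo; rewrite mcoeff_msupp.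
have -> : (f - Rlin f) S = f S - Rlin f S by rewrite !ffunE.
have [-> | S0] := eqVneq S set0.
  rewrite Rlin_set0 cards0 addn0 mcoeffB raddf_sum /=.
  under eq_bigr do rewrite mcoeffZ mcoeffX.
  case: ltnP => // deg_le1.
  have [/eqP/mdeg1P[i /eqP ->] | deg_ne1] := eqVneq (mdeg mo) 1%N.
    rewrite (bigD1 i) //= eqxx mulr1 big1 ?addr0 ?subrr ?eqxx // => k ki.
    by rewrite eq_mnm1 (negbTE ki) mulr0.
  have : mdeg mo == 0%N by rewrite -leqn0 -ltnS ltn_neqAle deg_ne1.
  rewrite mdeg_eq0 => /eqP ->; rewrite big1 ?subr0 => [f0 | k _]; last first.
    by rewrite mnm1_eq0 mulr0.
  by have := f_ge1 set0 0%MM; rewrite mcoeff_msupp mdeg0 cards0 f0 => /(_ isT).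
have [S_gt1 | S_le1] := ltnP 1 #|S|.
  by rewrite Rlin_eq0 // subr0 => _; apply: leq_trans S_gt1 (leq_addl _ _).
have /cards1P[j ->] : #|S| == 1%N by rewrite eqn_leq S_le1 card_gt0.
rewrite Rlin_set1 cards1 addn1 ltnS lt0n mdeg_eq0.
have [-> | //] := eqVneq mo 0%MM.
by rewrite mcoeffB mcoeffZ mcoeff1 eqxx mulr1 subrr eqxx.
Qed.

End LinearPart.

Section RgModule.
Variables (F : fieldType) (m n : nat) (M : zmodType).
Variables (Ract : Rsup F m n -> M -> M) (rho sigma : Wmn F m n -> M -> M).
Hypothesis HM : is_RgModule Ract rho sigma.

Lemma Ract0 v : Ract 0 v = 0.
Proof.
have [[_ RactD _ _] _] := HM.
by apply: (addrI (Ract 0 v)); rewrite addr0 -RactD addr0.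
Qed.

Lemma sigma0 v : sigma 0 v = 0.
Proof.
have [_ [_ [[_ sigmaD _ _] _]]] := HM.
by apply: (addrI (sigma 0 v)); rewrite addr0 -sigmaD ?addr0 //; apply: Wge0.
Qed.

Lemma sigma_mulgen_Rx k x v :
  sigma (Wmulgen (Rx F n k) x) v =
    rho (Wmulgen (Rx F n k) x) v - Ract (Rx F n k) (rho (Wgen F x) v).
Proof.
have [[_ _ Ract1 _] [_ [_ [_ _ _ rho_mulgen]]]] := HM.
rewrite (rho_mulgen x false _ (@Rpar_Rx _ _ _ k)) (bigD1 k) //= Rdx_Rx eqxx Ract1.
rewrite big1 => [|i /negbTE ik]; last by rewrite Rdx_Rx ik Ract0.
rewrite big1 => [|j _]; last by rewrite Rdy_Rx Ract0.
by rewrite mul0rz !addr0 addrC addKr.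
Qed.

Lemma sigma_mulgen_Ry k x v :
  sigma (Wmulgen (Ry F m k) x) v =
    rho (Wmulgen (Ry F m k) x) v - Ract (Ry F m k) (rho (Wgen F x) v).
Proof.
have [[_ _ Ract1 _] [_ [_ [_ _ _ rho_mulgen]]]] := HM.
rewrite (rho_mulgen x true _ (@Rpar_Ry _ _ _ k)) (bigD1 k) //= Rdy_Ry eqxx Ract1.
rewrite big1 => [|i _]; last by rewrite Rdx_Ry Ract0.
rewrite big1 => [|j /negbTE jk]; last by rewrite Rdy_Ry jk Ract0.
by rewrite /sgn /= mulr1z !addr0 addrC addKr.
Qed.

End RgModule.

Section SigmaStable.
Variables (F : fieldType) (m n : nat) (M : zmodType).
Variables (Ract : Rsup F m n -> M -> M) (rho sigma : Wmn F m n -> M -> M).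
Hypothesis HM : is_RgModule Ract rho sigma.
Hypothesis sigma_ge1 : forall D, Wge 1 D -> forall v, sigma D v = 0.
Variable M' : {pred M}.
Hypothesis M'0 : 0 \in M'.
Hypothesis M'D : forall u v, u \in M' -> v \in M' -> u + v \in M'.
Hypothesis M'N : forall u, u \in M' -> - u \in M'.
Hypothesis M'R : forall f u, u \in M' -> Ract f u \in M'.
Hypothesis M'rho : forall D u, u \in M' -> rho D u \in M'.
Local Notation R := (Rsup F m n).
Local Notation W := (Wmn F m n).

Definition sigma_stable (D : W) := Wge 0 D /\ {in M', forall u, sigma D u \in M'}.

Lemma sigma_stable0 : sigma_stable 0.
Proof. by split=> [|u _]; [apply: Wge0 | rewrite (sigma0 HM)]. Qed.

Lemma sigma_stableD D E : sigma_stable D -> sigma_stable E -> sigma_stable (D + E).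
Proof.
have [_ [_ [[_ sigmaD _ _] _]]] := HM.
move=> [D_ge0 D_st] [E_ge0 E_st]; split=> [|u u_in]; first exact: WgeD.
by rewrite sigmaD //; apply: M'D; [apply: D_st | apply: E_st].
Qed.

Lemma sigma_stable_sum k (G : 'I_k -> W) :
  (forall i, sigma_stable (G i)) -> sigma_stable (\sum_(i < k) G i).
Proof.
by move=> G_st; apply: big_ind => [||i _]; [exact: sigma_stable0 | exact: sigma_stableD |].
Qed.

Lemma sigma_stableZ c D : sigma_stable D -> sigma_stable (Wscale c D).
Proof.
have [_ [_ [[_ _ sigmaZ _] _]]] := HM.
move=> [D_ge0 D_st]; split=> [|u u_in]; first exact: WgeZ.
by rewrite sigmaZ //; apply/M'R/D_st.
Qed.

Lemma sigma_stable_Rge2 (f : R) x : Rge 2 f -> sigma_stable (Wmulgen f x).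
Proof.
move=> f_ge2; split=> [|u _]; first by apply/Wge_mulgen/RgeW.
by rewrite sigma_ge1 //; apply: Wge_mulgen.
Qed.

Lemma sigma_stable_Rx k x : sigma_stable (Wmulgen (Rx F n k) x).
Proof.
split=> [|u u_in]; first by apply/Wge_mulgen/Rge1_Rx.
by rewrite (sigma_mulgen_Rx HM); apply: M'D; [apply: M'rho | apply/M'N/M'R/M'rho].
Qed.

Lemma sigma_stable_Ry k x : sigma_stable (Wmulgen (Ry F m k) x).
Proof.
split=> [|u u_in]; first by apply/Wge_mulgen/Rge1_Ry.
by rewrite (sigma_mulgen_Ry HM); apply: M'D; [apply: M'rho | apply/M'N/M'R/M'rho].
Qed.

Lemma sigma_stable_mulgen (f : R) x : Rge 1 f -> sigma_stable (Wmulgen f x).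
Proof.
move=> f_ge1; rewrite -(subrK (Rlin f) f) WmulgenD.
apply: sigma_stableD; first exact/sigma_stable_Rge2/Rge2_subRlin.
rewrite /Rlin WmulgenD !Wmulgen_sum.
apply: sigma_stableD; apply: sigma_stable_sum => i; rewrite WmulgenZ; apply: sigma_stableZ.
  exact: sigma_stable_Rx.
exact: sigma_stable_Ry.
Qed.

Lemma sigma_stable_Wge0 D : Wge 0 D -> sigma_stable D.
Proof.
case=> D1_ge1 D2_ge1; rewrite (Wmn_decomp D).
apply: sigma_stableD; apply: sigma_stable_sum => i; apply: sigma_stable_mulgen.
  exact: D1_ge1.
exact: D2_ge1.
Qed.

End SigmaStable.

Theorem mainTheorem15 (F : closedFieldType) (charF0 : [pchar F] =i pred0)
    (m n : nat) (Hm : (1 <= m)%N) (Hn : (1 <= n)%N)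
    (M : zmodType) (Ract : Rsup F m n -> M -> M) (rho sigma : Wmn F m n -> M -> M)
    (HM : is_RgModule Ract rho sigma)
    (Hsigma1 : forall D, Wge 1 D -> forall v, sigma D v = 0)
    (M' : {pred M})
    (HM'0 : 0 \in M')
    (HM'D : forall u v, u \in M' -> v \in M' -> u + v \in M')
    (HM'N : forall u, u \in M' -> - u \in M')
    (HM'R : forall f u, u \in M' -> Ract f u \in M')
    (HM'rho : forall D u, u \in M' -> rho D u \in M') :
  forall D, Wge 0 D -> forall u, u \in M' -> sigma D u \in M'.
Proof.
move=> D D_ge0.
by have [_] := sigma_stable_Wge0 HM Hsigma1 HM'0 HM'D HM'N HM'R HM'rho D_ge0.
Qed.
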